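(* For $s\ge1$ let $E(s,0)$ be the number of pairs $(U,W)$ of $p$-strings of length $s$ whose meander graph $\Gamma^1_{2s-1}$ has no pierced circle. Then $\frac{E(s,0)}{C_s^2}\to 0$ as $s\to\infty$.
   Context: A $p$-string of length $s$ is a correctly matched (balanced) string of $s$ left and $s$ right parentheses; there are $C_s=\frac{1}{s+1}\binom{2s}{s}$ of them. Given two $p$-strings $U$ (upper) and $W$ (lower) of length $s$, the meander graph $\Gamma^1_{2s-1}$ is obtained by marking points $0,1,\dots,2s$ on the $x$-axis, taking the segment $[0,2s]$, joining points $a,b$ by an upper semicircle for each matched pair of $U$ at positions $a<b$ (positions $1,\dots,2s$), and joining points $a-1,b-1$ by a lower semicircle for each matched pair of $W$ at positions $a<b$; the vertices are the points $1,\dots,2s-1$. A pierced circle at position $i$ ($1\le i\le 2s-2$) is present if vertices $i$ and $i+1$ are joined both by an upper and by a lower semicircle. *)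

From mathcomp Require Import all_boot all_order all_algebra.
Set Implicit Arguments. Unset Strict Implicit. Unset Printing Implicit Defensive.
Import Order.TTheory GRing.Theory Num.Theory.

(* A parenthesis string is a seq bool: true = '(' , false = ')'.
   Positions are 1-based in the paper: position a is [nth false w a.-1]. *)

Definition depth (w : seq bool) (k : nat) : int :=
  (count id (take k w))%:Z - (count negb (take k w))%:Z.

Definition pstring (s : nat) (w : seq bool) : bool :=
  [&& size w == 2 * s, depth w (size w) == 0%R &
      [forall k : 'I_(size w).+1, (0 <= depth w k)%R]].

Definition matched (w : seq bool) (a b : nat) : bool :=
  [&& 0 < a, a < b, b <= size w, nth false w a.-1, ~~ nth false w b.-1,
      depth w b == depth w a.-1 &
      [forall k : 'I_b, (a <= k) ==> (depth w a.-1 < depth w k)%R]].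

(* pierced circle at position i (1 <= i <= 2s-2) of the meander graph of
   (U, W): vertices i, i+1 joined by an upper semicircle (U has the pair
   (i, i+1)) and by a lower semicircle (W has the pair (i+1, i+2), which is
   drawn between points i and i+1). *)
Definition pierced (s : nat) (U W : seq bool) (i : nat) : bool :=
  [&& 1 <= i, i <= 2 * s - 2, matched U i i.+1 & matched W i.+1 i.+2].

Definition no_pierced (s : nat) (U W : seq bool) : bool :=
  [forall i : 'I_(2 * s), ~~ pierced s U W i].

Definition E0 (s : nat) : nat :=
  #|[set p : (2 * s).-tuple bool * (2 * s).-tuple bool |
      [&& pstring s p.1, pstring s p.2 & no_pierced s p.1 p.2]]|.

Definition catalan (s : nat) : rat := ('C(2 * s, s))%:R / (s.+1)%:R.

From mathcomp Require Import all_boot all_order all_algebra zify.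
Import Order.TTheory GRing.Theory Num.Theory.

(* A pierced circle at position 3k+1 is visible on the strings alone: U reads
   "()" at 0-based positions 3k, 3k+1 and W reads "()" at 3k+1, 3k+2.  With
   m = (2s)/3 disjoint such windows, a pair without pierced circle avoids one
   of the 64 possible local configurations in each window, so
   E(s,0) <= 63^m 4^(2s-3m) = 4^(2s) (63/64)^m.  Since C_s >= 4^s/((s+1)(2s+1)),
   E(s,0)/C_s^2 <= (63/64)^m ((s+1)(2s+1))^2, and the exponential factor wins
   over the polynomial one by Bernoulli's inequality applied blockwise. *)

Lemma depthS (w : seq bool) k : k < size w ->
  depth w k.+1 = (depth w k + (if nth false w k then 1 else -1))%R.
Proof.
move=> lt_k; rewrite /depth (take_nth false lt_k) -cats1 !count_cat /=.
by case: (nth false w k) => /=; rewrite ?addn0 ?addn1 ?PoszD; lia.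
Qed.

Lemma matched_peak (w : seq bool) a : 0 < a -> a < size w ->
  nth false w a.-1 -> ~~ nth false w a -> matched w a a.+1.
Proof.
move=> a_gt0 lt_a_w open close.
have up : depth w a = (depth w a.-1 + 1)%R.
  by rewrite -{1}(prednK a_gt0) depthS ?open ?prednK //; lia.
have down : depth w a.+1 = (depth w a - 1)%R by rewrite depthS // (negbTE close).
rewrite /matched a_gt0 ltnSn lt_a_w open close down up addrK eqxx /=.
apply/forallP => k; apply/implyP => le_a_k.
by rewrite (_ : nat_of_ord k = a) ?up ?ltrDl //; have := ltn_ord k; lia.
Qed.

Definition pierce_pattern (u w : seq bool) (i : nat) : bool :=
  [&& nth false u i, ~~ nth false u i.+1, nth false w i.+1 & ~~ nth false w i.+2].

Lemma no_pierced_pattern s (U W : seq bool) i :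
  size U = 2 * s -> size W = 2 * s -> i.+2 < 2 * s ->
  no_pierced s U W -> ~~ pierce_pattern U W i.
Proof.
move=> sizeU sizeW lt_i /forallP/(_ (Ordinal (ltnW lt_i))).
apply: contra => /and4P [U_open U_close W_open W_close].
rewrite /pierced /= matched_peak ?matched_peak ?sizeU ?sizeW //=; lia.
Qed.

Lemma pierce_pattern_drop n (u w : seq bool) i :
  pierce_pattern (drop n u) (drop n w) i = pierce_pattern u w (n + i).
Proof. by rewrite /pierce_pattern !nth_drop !addnS. Qed.

Lemma pierce_pattern_take n (u w : seq bool) i : i.+2 < n ->
  pierce_pattern (take n u) (take n w) i = pierce_pattern u w i.
Proof. by move=> lt_i; rewrite /pierce_pattern !nth_take //; lia. Qed.

Definition avoids_pattern (m : nat) (u w : seq bool) : bool :=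
  all (fun k => ~~ pierce_pattern u w (3 * k)) (iota 0 m).

Lemma avoids_patternS m u w : avoids_pattern m.+1 u w =
  ~~ pierce_pattern (take 3 u) (take 3 w) 0 && avoids_pattern m (drop 3 u) (drop 3 w).
Proof.
rewrite /avoids_pattern /= pierce_pattern_take // (iotaDl 1 0) all_map.
by congr (_ && _); apply: eq_all => k /=; rewrite pierce_pattern_drop mulnS.
Qed.

Lemma no_pierced_avoids s m (U W : seq bool) :
  size U = 2 * s -> size W = 2 * s -> 3 * m <= 2 * s ->
  no_pierced s U W -> avoids_pattern m U W.
Proof.
move=> sizeU sizeW le_m no_pU.
apply/allP => k; rewrite mem_iota => /andP [_ lt_k].
apply: no_pierced_pattern sizeU sizeW _ no_pU; lia.
Qed.

Definition pair_count n (P : seq bool -> seq bool -> bool) : nat :=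
  #|[set p : n.-tuple bool * n.-tuple bool | P p.1 p.2]|.

Lemma eq_pair_count n (P Q : seq bool -> seq bool -> bool) :
  (forall u w, P u w = Q u w) -> pair_count n P = pair_count n Q.
Proof. by move=> eqPQ; apply: eq_card => p; rewrite !inE eqPQ. Qed.

Lemma pair_count_max n P : pair_count n P <= 4 ^ n.
Proof.
by apply: leq_trans (max_card _) _; rewrite card_prod card_tuple card_bool -expnMn.
Qed.

Lemma pair_count_cat a b P Q :
  pair_count (a + b) (fun u w => P (take a u) (take a w) && Q (drop a u) (drop a w))
  <= pair_count a P * pair_count b Q.
Proof.
rewrite /pair_count -cardsX.
pose glue (x : (a.-tuple bool * a.-tuple bool) * (b.-tuple bool * b.-tuple bool)) :=
  ([tuple of x.1.1 ++ x.2.1], [tuple of x.1.2 ++ x.2.2]).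
apply: leq_trans (leq_imset_card glue _); apply: subset_leq_card.
apply/subsetP => -[u w]; rewrite inE /= => /andP [Pu Qw].
have take_size (t : (a + b).-tuple bool) : size (take a t) == a.
  by rewrite size_takel // size_tuple leq_addr.
have drop_size (t : (a + b).-tuple bool) : size (drop a t) == b.
  by rewrite size_drop size_tuple addKn.
apply/imsetP; exists ((Tuple (take_size u), Tuple (take_size w)),
                      (Tuple (drop_size u), Tuple (drop_size w))).
  by rewrite !inE /= Pu Qw.
by congr pair; apply: val_inj; rewrite /= cat_take_drop.
Qed.

Lemma pair_count_window : pair_count 3 (fun u w => ~~ pierce_pattern u w 0) <= 63.
Proof.
pose pattern : 3.-tuple bool * 3.-tuple bool :=
  ([tuple true; false; false], [tuple false; true; false]).
have -> : 63 = #|[set~ pattern]| by rewrite cardsC1 card_prod !card_tuple card_bool.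
by apply: subset_leq_card; apply/subsetP => p; rewrite !inE; apply: contra => /eqP ->.
Qed.

Lemma pair_count_avoids m n : 3 * m <= n ->
  pair_count n (avoids_pattern m) <= 63 ^ m * 4 ^ (n - 3 * m).
Proof.
elim: m n => [|m IH] n le_mn; first by rewrite muln0 subn0 mul1n pair_count_max.
have n_eq : n = 3 + (n - 3) by lia.
rewrite n_eq (@eq_pair_count _ _ _ (avoids_patternS m)) expnS -mulnA.
apply: leq_trans (pair_count_cat _ _ (fun u w => ~~ pierce_pattern u w 0) _) _.
apply: leq_mul pair_count_window _.
by rewrite (_ : _ - 3 * m.+1 = n - 3 - 3 * m) ?IH; lia.
Qed.

Lemma E0_le_avoids s m :
  3 * m <= 2 * s -> E0 s <= pair_count (2 * s) (avoids_pattern m).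
Proof.
move=> le_m; apply: subset_leq_card; apply/subsetP => p; rewrite !inE.
by case/and3P => _ _; apply: no_pierced_avoids; rewrite ?size_tuple.
Qed.

Lemma E0_mul_pow_le s m : 3 * m <= 2 * s -> E0 s * 64 ^ m <= 63 ^ m * 4 ^ (2 * s).
Proof.
move=> le_m; rewrite -(subnK le_m) expnD (_ : 64 = 4 ^ 3) // -expnM mulnA leq_mul2r.
by rewrite expn_eq0 /= (leq_trans (E0_le_avoids _ _ le_m)) ?pair_count_avoids.
Qed.

Lemma mul_central_binS s :
  s.+1 * 'C(2 * s.+1, s.+1) = 2 * (2 * s).+1 * 'C(2 * s, s).
Proof.
have sym : 'C((2 * s).+1, s.+1) = 'C((2 * s).+1, s).
  by rewrite -bin_sub; first congr binomial; lia.
have step_odd := mul_bin_diag (2 * s).+1 s.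
have step_even := mul_bin_diag (2 * s.+1) s.
rewrite sym /= in step_odd.
rewrite (_ : (2 * s.+1).-1 = (2 * s).+1) in step_even; last by lia.
move: step_odd step_even; set x := 'C(_, s); set y := 'C(2 * s, s); nia.
Qed.

Lemma exp4_le_central_bin s : 4 ^ s <= (2 * s).+1 * 'C(2 * s, s).
Proof.
elim: s => [|s IH]; first by rewrite muln0 bin0.
rewrite -(leq_pmul2l (ltn0Sn s)) mulnCA mul_central_binS expnS.
move: IH; set c := 'C(2 * s, s); set x := 4 ^ s; nia.
Qed.

Lemma leq_exp2rW m n e : m <= n -> m ^ e <= n ^ e.
Proof. by move=> le_mn; case: e => // e; rewrite leq_exp2r. Qed.

Lemma bernoulli_nat a m : a ^ m * (a + m) <= a * a.+1 ^ m.
Proof.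
elim: m => [|m IH]; first by rewrite addn0 muln1 mul1n.
rewrite !expnS; move: IH; set x := a ^ m; set y := a.+1 ^ m => IH; nia.
Qed.

Lemma pow_block_bound a b m : 0 < b ->
  a ^ m * (a + m %/ b) ^ b <= a ^ b * a.+1 ^ m.
Proof.
move=> b_gt0; set q := m %/ b.
have m_eq : m = q * b + m %% b by rewrite -divn_eq.
have block : (a ^ q * (a + q)) ^ b <= (a * a.+1 ^ q) ^ b.
  by rewrite leq_exp2r // bernoulli_nat.
rewrite !expnMn -!expnM in block.
rewrite [in a ^ m]m_eq [in a.+1 ^ m]m_eq !expnD mulnAC mulnA.
by rewrite leq_mul // leq_exp2rW.
Qed.

Lemma exp_dominates_poly a k K : 0 < a ->
  exists N, forall m, N <= m -> K * m.+1 ^ k * a ^ m < a.+1 ^ m.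
Proof.
move=> a_gt0; set b := k.+1; set c := K * b ^ k * a ^ b.
exists (c.+1 * b) => m le_m; set q := m %/ b.
have lt_c_q : c < q by rewrite leq_divRL.
have le_m_q : m.+1 <= b * q.+1 by rewrite mulnC ltn_ceil.
have block := pow_block_bound a b m (ltn0Sn k); rewrite -/q in block.
rewrite -(ltn_pmul2r (_ : 0 < (a + q) ^ b)) ?expn_gt0 ?addn_gt0 ?a_gt0 //.
apply: leq_ltn_trans (_ : _ <= c * q.+1 ^ k * a.+1 ^ m) _.
  apply: leq_trans (_ : _ <= K * (b * q.+1) ^ k * (a ^ b * a.+1 ^ m)) _.
    by rewrite -mulnA leq_mul // leq_mul // leq_exp2rW.
  by rewrite expnMn /c; lia.
rewrite [in ltnRHS]mulnC ltn_pmul2r ?expn_gt0 // expnS.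
by apply: ltn_mull; rewrite ?expn_gt0 ?leq_exp2rW; lia.
Qed.

Lemma E0_eventually_small K :
  exists N, forall s, N <= s -> K * E0 s * s.+1 ^ 2 < 'C(2 * s, s) ^ 2.
Proof.
have [N decay] := exp_dominates_poly 63 4 (36 * K) isT.
exists (3 * N) => s le_s; set m := (2 * s) %/ 3; set C := 'C(2 * s, s).
have central := exp4_le_central_bin s; rewrite -/C in central.
have le_m : 3 * m <= 2 * s by rewrite mulnC leq_trunc_div.
have le_N_m : N <= m by lia.
have E0_bound := E0_mul_pow_le _ _ le_m.
have pow4_bound : 4 ^ (2 * s) <= ((2 * s).+1 * C) ^ 2.
  by rewrite [in leqLHS]mulnC expnM; apply: leq_exp2rW.
have poly_bound : (s.+1 * (2 * s).+1) ^ 2 <= 36 * m.+1 ^ 4.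
  have lt_s_m : 2 * s < 3 * m.+1 by lia.
  rewrite (_ : 36 * _ = (6 * m.+1 ^ 2) ^ 2); last by rewrite expnMn -expnM.
  apply: leq_exp2rW; nia.
have C_gt0 : 0 < C ^ 2 by rewrite expn_gt0 bin_gt0; lia.
rewrite -(ltn_pmul2r (_ : 0 < 64 ^ m)) ?expn_gt0 //.
apply: leq_ltn_trans (_ : _ <= K * (s.+1 * (2 * s).+1) ^ 2 * 63 ^ m * C ^ 2) _.
  apply: leq_trans (_ : _ <= K * s.+1 ^ 2 * (63 ^ m * ((2 * s).+1 * C) ^ 2)) _.
    rewrite (_ : K * E0 s * _ * _ = K * s.+1 ^ 2 * (E0 s * 64 ^ m)); last by lia.
    by rewrite leq_mul // (leq_trans E0_bound) // leq_mul.
  by rewrite !expnMn; lia.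
rewrite [C ^ 2 * _]mulnC ltn_pmul2r //; apply: leq_ltn_trans (decay m le_N_m).
by rewrite leq_mul2r (mulnC 36) -mulnA leq_mul2l poly_bound !orbT.
Qed.

Theorem proposition4p3 :
  forall eps : rat, (0 < eps)%R ->
  exists N : nat, forall s : nat, (N <= s)%N ->
    ((E0 s)%:R / (catalan s ^+ 2) < eps)%R.
Proof.
move=> eps eps_gt0; set K := Num.bound eps^-1.
have epsV_lt_K : (eps^-1 < K%:R)%R by apply: archi_boundP; rewrite invr_ge0 ltW.
have one_lt_epsK : (1 < eps * K%:R)%R.
  by move: epsV_lt_K; rewrite -(ltr_pM2l eps_gt0 eps^-1%R) mulfV // gt_eqF.
have [N small] := E0_eventually_small K.
exists N => s /small; rewrite -(ltr_nat rat) !natrM => lt_KE_C.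
have C_gt0 : (0 < 'C(2 * s, s)%:R :> rat)%R by rewrite ltr0n bin_gt0 leq_pmull.
rewrite /catalan expr_div_n invf_div mulrA ltr_pdivrMr ?exprn_gt0 // !expr2.
apply: le_lt_trans (_ : _ <= eps * K%:R * ((E0 s)%:R * (s.+1%:R * s.+1%:R)))%R _.
  by rewrite ler_peMl ?mulr_ge0 // ltW.
by rewrite -mulrA ltr_pM2l // mulrA.
Qed.
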